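(* Let $n\ge 3$. Let $c_{n,6}=-\min_{x\in[-1,1]}Q_{n,6}(x)$ and $b_{n,6}=1+Q_{n,6}(1)/c_{n,6}$. Then there is no finite subset $Y\subseteq\mathbb{S}^{n-1}$ which is a spherical design of harmonic index $6$ and has $|Y|=b_{n,6}$ (i.e. there is no tight spherical design of harmonic index $6$ on $\mathbb{S}^{n-1}$).
   Context: $\mathbb{S}^{n-1}$ is the unit sphere in $\mathbb{R}^n$. A finite $Y\subseteq\mathbb{S}^{n-1}$ is a spherical design of harmonic index $t$ if $\sum_{\mathbf{x}\in Y}f(\mathbf{x})=0$ for every real homogeneous harmonic polynomial $f$ in $n$ variables of degree exactly $t$. Every such $Y$ satisfies $|Y|\ge b_{n,t}:=1+Q_{n,t}(1)/c_{n,t}$ with $c_{n,t}=-\min_{[-1,1]}Q_{n,t}$; $Y$ is called tight if equality holds. Here $Q_{n,6}(x)=\frac{n(n+2)(n+10)}{6!}\{(n+4)(n+6)(n+8)x^6-15(n+4)(n+6)x^4+45(n+4)x^2-15\}$ is the Gegenbauer polynomial of degree 6, normalized so that $Q_{n,6}(1)$ equals the dimension of the space of homogeneous harmonic polynomials of degree 6 in $n$ variables. *)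

From HB Require Import structures.
From mathcomp Require Import all_boot all_order all_algebra.
From mathcomp Require Import boolp classical_sets reals.
From mathcomp Require Import mpoly.
Set Implicit Arguments. Unset Strict Implicit. Unset Printing Implicit Defensive.
Import Order.TTheory GRing.Theory Num.Theory.
Local Open Scope ring_scope.
Local Open Scope classical_set_scope.

Section Defs.
Context {R : realType}.

(* Gegenbauer polynomial Q_{n,6}, normalized so Q_{n,6}(1) = dim Harm_6(R^n). *)
Definition Q6 (n : nat) (x : R) : R :=
  let m := n%:R : R in
  (m * (m + 2) * (m + 10) / 6`!%:R) *
  ((m + 4) * (m + 6) * (m + 8) * x ^+ 6 - 15 * (m + 4) * (m + 6) * x ^+ 4
   + 45 * (m + 4) * x ^+ 2 - 15).

(* c_{n,6} = - min_{x in [-1,1]} Q_{n,6}(x) (the infimum is attained). *)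
Definition c6 (n : nat) : R :=
  - inf [set Q6 n x | x in [set x : R | -1 <= x <= 1]].

Definition b6 (n : nat) : R := 1 + Q6 n 1 / c6 n.

Definition coords (n : nat) (y : 'rV[R]_n) : 'I_n -> R := fun i => y ord0 i.

Definition on_sphere (n : nat) (y : 'rV[R]_n) : Prop :=
  \sum_(i < n) y ord0 i ^+ 2 = 1.

Definition laplacian (n : nat) (p : {mpoly R[n]}) : {mpoly R[n]} :=
  \sum_(i < n) mderiv i (mderiv i p).

Definition harmonic_homog (n t : nat) (p : {mpoly R[n]}) : Prop :=
  p \is t.-homog /\ laplacian p = 0.

(* Y (a finite set given as a duplicate-free list) is a spherical design of
   harmonic index t *)
Definition harmonic_index_design (n t : nat) (Y : seq 'rV[R]_n) : Prop :=
  forall p : {mpoly R[n]}, harmonic_homog t p ->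
    \sum_(y <- Y) p.@[coords y] = 0.

End Defs.

From HB Require Import structures.
From mathcomp Require Import all_boot all_order all_algebra.
From mathcomp Require Import boolp classical_sets reals.
From mathcomp Require Import mpoly.
From mathcomp Require Import ring lra.
Import Order.TTheory GRing.Theory Num.Theory.
Set Implicit Arguments. Unset Strict Implicit. Unset Printing Implicit Defensive.
Local Open Scope ring_scope.

(* Write Q_{n,6}(x) = K q(x^2) with q a cubic.  For x in a tight design Y of
   harmonic index 6, summing the zonal harmonic with pole x over Y gives
   sum_y Q(<x,y>) = 0; as Q >= -c on [-1,1] and |Y| = 1 + Q(1)/c, every term
   with y <> x equals -c, so each <x,y>^2 minimises q on [0,1].  That minimiser
   is interior and unique, hence all squared inner products equal one s with
   n s >= 1.  The t^2-coefficient of the design identity at the pole x + t v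
   shows that the frame form sum_y <u,y><v,y> - lam <u,v> vanishes on each
   hyperplane x^perp, hence everywhere (three equiangular lines suffice).
   Evaluating it at a point of Y and taking its trace gives lam = 1 + (|Y|-1) s
   and |Y| = lam n, incompatible with n s >= 1 and n >= 3. *)

Section GegenbauerCubic.
Variable R : comNzRingType.
Implicit Types m s u E S : R.

Definition q6A m := (m + 4) * (m + 6) * (m + 8).
Definition q6B m := 15 * (m + 4) * (m + 6).
Definition q6C m := 45 * (m + 4).

Definition q6 m s := q6A m * s ^+ 3 - q6B m * s ^+ 2 + q6C m * s - 15.
Definition dq6 m s := 3 * q6A m * s ^+ 2 - 2 * q6B m * s + q6C m.

(* Half the second derivative of u |-> q6 m (u^2) at u^2 = s. *)
Definition q6_curv m s := 15 * q6A m * s ^+ 2 - 6 * q6B m * s + q6C m.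

(* E^3 S^3 q6 m (u^2 / (E S)): for u = <e,y>, E = |e|^2 and S = |y|^2 this is,
   up to a constant factor, the zonal harmonic of degree 6 with pole e. *)
Definition zonal6 m u E S :=
  q6A m * u ^+ 6 - q6B m * E * u ^+ 4 * S + q6C m * E ^+ 2 * u ^+ 2 * S ^+ 2
  - 15 * E ^+ 3 * S ^+ 3.

Lemma zonal6_unit m u : zonal6 m u 1 1 = q6 m (u ^+ 2).
Proof. by rewrite /zonal6 /q6; ring. Qed.

End GegenbauerCubic.

Section MPolyBasics.
Variables (R : comNzRingType) (n : nat).

Lemma mderivXU (i j : 'I_n) : mderiv i ('X_j : {mpoly R[n]}) = (i == j)%:R.
Proof.
rewrite mderivX mnm1E eq_sym.
have [->|_] := eqVneq i j; last by rewrite scale0r.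
have ->: (U_(j) - U_(j) = 0)%MM by apply/mnmP=> k; rewrite !mnmE subnn.
by rewrite mpolyX0 scale1r.
Qed.

Lemma mderivXn i (p : {mpoly R[n]}) k :
  mderiv i (p ^+ k.+1) = p ^+ k * mderiv i p *+ k.+1.
Proof.
elim: k => [|k ih]; first by rewrite expr1 expr0 mul1r.
by rewrite exprS mderivM ih exprS -mulrnAr mulrSr; ring.
Qed.

Lemma mpolyC_homog (c : R) : (c%:MP : {mpoly R[n]}) \is 0.-homog.
Proof. by rewrite -[c%:MP]mulr1 mul_mpolyC; apply/dhomogZ/dhomog1. Qed.

Lemma mpolyXU_homog i : ('X_i : {mpoly R[n]}) \is 1.-homog.
Proof. by rewrite dhomogX; apply/eqP/mdeg1. Qed.

End MPolyBasics.

Section ZonalHarmonic.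
Variables (R : realType) (n : nat) (e : 'I_n -> R).
Local Notation m := (n%:R : R).

Definition lin_mpoly : {mpoly R[n]} := \sum_i (e i)%:MP * 'X_i.
Definition sqnorm_mpoly : {mpoly R[n]} := \sum_i 'X_i ^+ 2.
Local Notation E := (\sum_i e i ^+ 2).

Definition zonal6_mpoly : {mpoly R[n]} :=
  (q6A m)%:MP * lin_mpoly ^+ 6 - (q6B m * E)%:MP * (lin_mpoly ^+ 4 * sqnorm_mpoly)
  + (q6C m * E ^+ 2)%:MP * (lin_mpoly ^+ 2 * sqnorm_mpoly ^+ 2)
  - (15 * E ^+ 3)%:MP * sqnorm_mpoly ^+ 3.

Lemma mderiv_lin_mpoly i : mderiv i lin_mpoly = (e i)%:MP.
Proof.
rewrite raddf_sum (bigD1 i) //= mderiv_mulC mderivXU eqxx mulr1 big1 ?addr0 //.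
by move=> j /negbTE ji; rewrite mderiv_mulC mderivXU eq_sym ji mulr0.
Qed.

Lemma mderiv_sqnorm_mpoly i : mderiv i sqnorm_mpoly = 'X_i *+ 2.
Proof.
rewrite raddf_sum (bigD1 i) //= mderivXn mderivXU eqxx expr1 mulr1 big1 ?addr0 //.
by move=> j /negbTE ji; rewrite mderivXn mderivXU eq_sym ji mulr0 mul0rn.
Qed.

Local Notation L := lin_mpoly.
Local Notation S := sqnorm_mpoly.
Local Notation A := ((q6A m)%:MP : {mpoly R[n]}).
Local Notation B := ((q6B m * E)%:MP : {mpoly R[n]}).
Local Notation C := ((q6C m * E ^+ 2)%:MP : {mpoly R[n]}).
Local Notation D := ((E ^+ 3)%:MP : {mpoly R[n]}).

Lemma mderiv2_zonal6_mpoly i : mderiv i (mderiv i zonal6_mpoly) =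
  (30 * A * L ^+ 4 - 12 * B * L ^+ 2 * S + 2 * C * S ^+ 2) * (e i)%:MP ^+ 2
  + (- 16 * B * L ^+ 3 + 16 * C * L * S) * ((e i)%:MP * 'X_i)
  + (8 * C * L ^+ 2 - 360 * D * S) * 'X_i ^+ 2
  + (- 2 * B * L ^+ 4 + 4 * C * L ^+ 2 * S - 90 * D * S ^+ 2).
Proof.
rewrite /zonal6_mpoly !(mderivB, mderivD, mderiv_mulC, mderivM, mderivXn,
  mderiv_lin_mpoly, mderiv_sqnorm_mpoly, mderivC, mderivXU, mderivMn) eqxx.
rewrite (rmorphM _ 15) /=.
ring.
Qed.

Lemma sum_quadratic_in_e (P0 P1 P2 P3 : {mpoly R[n]}) :
  \sum_i (P0 * (e i)%:MP ^+ 2 + P1 * ((e i)%:MP * 'X_i) + P2 * 'X_i ^+ 2 + P3)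
  = P0 * E%:MP + P1 * L + P2 * S + P3 * m%:MP.
Proof.
rewrite !big_split /= -!mulr_sumr sumr_const card_ord mpolyC_nat -mulr_natr.
congr (_ + _ + _ + _); first congr (_ * _).
  by rewrite rmorph_sum; apply: eq_bigr => i _; rewrite rmorphXn.
by rewrite mul1r mulr_natr.
Qed.

Lemma laplacian_zonal6_mpoly : laplacian zonal6_mpoly = 0.
Proof.
rewrite /laplacian (eq_bigr _ (fun i _ => mderiv2_zonal6_mpoly i)).
rewrite sum_quadratic_in_e /q6A /q6B /q6C !(rmorphM, rmorphD, rmorphXn) /=.
ring.
Qed.

Lemma lin_mpoly_homog : lin_mpoly \is 1.-homog.
Proof.
by apply: rpred_sum => i _; exact: dhomogM (mpolyC_homog n _) (@mpolyXU_homog R n i).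
Qed.

Lemma sqnorm_mpoly_homog : sqnorm_mpoly \is 2.-homog.
Proof. by apply: rpred_sum => i _; exact: dhomogMn 2 (@mpolyXU_homog R n i). Qed.

Lemma zonal6_mpoly_homog : zonal6_mpoly \is 6.-homog.
Proof.
have hL := lin_mpoly_homog; have hS := sqnorm_mpoly_homog.
apply: rpredB; first apply: rpredD; first apply: rpredB.
- exact: dhomogM (mpolyC_homog n _) (dhomogMn 6 hL).
- exact: dhomogM (mpolyC_homog n _) (dhomogM (dhomogMn 4 hL) hS).
- exact: dhomogM (mpolyC_homog n _) (dhomogM (dhomogMn 2 hL) (dhomogMn 2 hS)).
- exact: dhomogM (mpolyC_homog n _) (dhomogMn 3 hS).
Qed.

Lemma meval_zonal6_mpoly (v : 'I_n -> R) : zonal6_mpoly.@[v] =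
  zonal6 m (\sum_i e i * v i) (\sum_i e i ^+ 2) (\sum_i v i ^+ 2).
Proof.
have mevalXn p k : (p ^+ k).@[v] = p.@[v] ^+ k by exact: rmorphXn.
have evL : lin_mpoly.@[v] = \sum_i e i * v i.
  by rewrite raddf_sum; apply: eq_bigr => i _; rewrite /= mevalM mevalC mevalXU.
have evS : sqnorm_mpoly.@[v] = \sum_i v i ^+ 2.
  by rewrite raddf_sum; apply: eq_bigr => i _; rewrite /= mevalXn mevalXU.
rewrite /zonal6_mpoly !(mevalB, mevalD, mevalM, mevalC, mevalXn) evL evS.
by rewrite /zonal6; ring.
Qed.

End ZonalHarmonic.

Lemma ge0_of_ge0_shift (R : realFieldType) (d M eps : R) : 0 < eps ->
  (forall h, 0 < h <= eps -> 0 <= d + h * M) -> 0 <= d.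
Proof.
move=> eps_gt0 shift; rewrite leNgt; apply/negP => d_lt0.
have M1_gt0 : 0 < `|M| + 1 by rewrite ltr_pwDr.
set h := Num.min eps (- d / (2 * (`|M| + 1))).
have h_gt0 : 0 < h by rewrite lt_min eps_gt0 divr_gt0 ?mulr_gt0 //; lra.
have h_le : h * (2 * (`|M| + 1)) <= - d.
  by rewrite -ler_pdivlMr ?mulr_gt0 // ge_min lexx orbT.
have hM : h * M <= h * (`|M| + 1).
  by rewrite ler_pM2l //; have := ler_norm M; lra.
have := shift h; rewrite h_gt0 ge_min lexx /= => /(_ isT); lra.
Qed.

Section GegenbauerCubicBounds.
Variables (R : realFieldType) (m : R).

Lemma q6A_gt0 : 3 <= m -> 0 < q6A m.
Proof. by move=> m_ge3; rewrite /q6A !mulr_gt0 //; lra. Qed.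

Lemma q6B_gt0 : 3 <= m -> 0 < q6B m.
Proof. by move=> m_ge3; rewrite /q6B !mulr_gt0 //; lra. Qed.

Lemma q6_sub s t :
  q6 m t - q6 m s = (t - s) * (dq6 m s + (t - s) * (q6A m * (t + 2 * s) - q6B m)).
Proof. by rewrite /q6 /dq6; ring. Qed.

Lemma q6_add_q6_1_ge1 s : 3 <= m -> 0 <= s <= 1 -> 1 <= q6 m s + q6 m 1.
Proof.
move=> m_ge3 /andP[s_ge0 s_le1].
set P := m + 6.
have P_ge9 : 9 <= P by rewrite /P; lra.
have -> : q6 m s + q6 m 1 = (P - 2) * ((s ^+ 3 + 1) * P ^+ 2
    + (2 * s ^+ 3 - 15 * s ^+ 2 - 13) * P + 45 * (s + 1)) - 30.
  by rewrite /q6 /q6A /q6B /q6C /P; ring.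
(* The bracket is nondecreasing in P >= 9, where it is at least 5. *)
have at9 : 5 <= 99 * s ^+ 3 - 135 * s ^+ 2 + 45 * s + 9.
  have := mulr_ge0 s_ge0 (sqr_ge0 (s - 7 / 10)); nra.
have mono : 0 <= (P - 9) * ((s ^+ 3 + 1) * (P + 9) + (2 * s ^+ 3 - 15 * s ^+ 2 - 13)).
  apply: mulr_ge0; first lra.
  have : 0 <= s ^+ 3 by exact: exprn_ge0.
  have : 0 <= s * (s - 1 / 2) ^+ 2 by apply: mulr_ge0 => //; exact: sqr_ge0.
  nra.
have : 99 * s ^+ 3 - 135 * s ^+ 2 + 45 * s + 9 <=
  (s ^+ 3 + 1) * P ^+ 2 + (2 * s ^+ 3 - 15 * s ^+ 2 - 13) * P + 45 * (s + 1) by nra.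
nra.
Qed.

Lemma q6_lt_N15 : 3 <= m -> q6 m (15 / (2 * (m + 8))) < -15.
Proof.
move=> m_ge3; set s := 15 / (2 * (m + 8)).
have s_gt0 : 0 < s by rewrite divr_gt0 //; lra.
have sm8 : s * (m + 8) = 15 / 2 by rewrite /s; field; lra.
have s_le : s <= 15 / 22 by rewrite ler_pdivlMr //; nra.
have -> : q6 m s = s * (m + 4) * (s * (m + 6) * (s * (m + 8) - 15) + 45) - 15.
  by rewrite /q6 /q6A /q6B /q6C; ring.
rewrite sm8 (_ : s * (m + 6) = 15 / 2 - 2 * s); last by nra.
have : 0 < s * (m + 4) by rewrite mulr_gt0 //; lra.
nra.
Qed.

Lemma dq6_eq0_of_min s : 3 <= m -> 0 < s < 1 ->
  (forall t, 0 <= t <= 1 -> q6 m s <= q6 m t) -> dq6 m s = 0.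
Proof.
move=> m_ge3 /andP[s_gt0 s_lt1] s_min.
have hA := q6A_gt0 m_ge3; have hB := q6B_gt0 m_ge3.
set M := 3 * q6A m + q6B m.
have r_le t : 0 <= t <= 1 -> `|q6A m * (t + 2 * s) - q6B m| <= M.
  by move=> /andP[t_ge0 t_le1]; rewrite ler_norml /M; apply/andP; split; nra.
apply/eqP; rewrite eq_le; apply/andP; split; rewrite -?oppr_ge0.
- apply: (@ge0_of_ge0_shift _ _ M s) => // h /andP[h_gt0 h_le].
  have t01 : 0 <= s - h <= 1 by apply/andP; split; lra.
  have := s_min _ t01; rewrite -subr_ge0 q6_sub.
  have := r_le _ t01; rewrite ler_norml => /andP[r1 r2].
  rewrite (_ : s - h - s = - h); last by ring.
  nra.
- apply: (@ge0_of_ge0_shift _ _ M (1 - s)); first lra.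
  move=> h /andP[h_gt0 h_le].
  have t01 : 0 <= s + h <= 1 by apply/andP; split; lra.
  have := s_min _ t01; rewrite -subr_ge0 q6_sub.
  have := r_le _ t01; rewrite ler_norml => /andP[r1 r2].
  rewrite (_ : s + h - s = h); last by ring.
  nra.
Qed.

Lemma q6B_le_of_min s : 3 <= m -> 0 < s < 1 ->
  (forall t, 0 <= t <= 1 -> q6 m s <= q6 m t) -> q6B m <= 3 * q6A m * s.
Proof.
move=> m_ge3 s01 s_min; have crit := dq6_eq0_of_min m_ge3 s01 s_min.
move: s01 => /andP[s_gt0 s_lt1]; have hA := q6A_gt0 m_ge3.
rewrite -subr_ge0; apply: (@ge0_of_ge0_shift _ _ (q6A m) (1 - s)); first lra.
move=> h /andP[h_gt0 h_le].
have t01 : 0 <= s + h <= 1 by apply/andP; split; lra.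
have := s_min _ t01; rewrite -subr_ge0 q6_sub crit add0r.
rewrite (_ : s + h - s = h); last by ring.
rewrite mulrA -expr2 pmulr_rge0 ?exprn_gt0 //; lra.
Qed.

Lemma min_q6_uniq s t : 3 <= m -> dq6 m s = 0 -> q6B m <= 3 * q6A m * s ->
  dq6 m t = 0 -> q6B m <= 3 * q6A m * t -> s = t.
Proof.
move=> m_ge3 ds s_ge dt t_ge; have hA := q6A_gt0 m_ge3.
have : (s - t) * (3 * q6A m * (s + t) - 2 * q6B m) = 0.
  by rewrite -[RHS](subrr 0) -{1}ds -dt /dq6; ring.
move/eqP; rewrite mulf_eq0 subr_eq0 => /orP[/eqP //|/eqP sum_st].
have : 3 * q6A m * (s - t) = 0 by lra.
by move/eqP; rewrite mulf_eq0 subr_eq0 => /orP[/eqP|/eqP]; lra.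
Qed.

Lemma min_q6_ge s : 3 <= m -> q6B m <= 3 * q6A m * s -> 5 <= (m + 8) * s.
Proof.
move=> m_ge3; have h46 : 0 < 3 * ((m + 4) * (m + 6)) by rewrite !mulr_gt0 //; lra.
rewrite /q6A /q6B (_ : 15 * (m + 4) * (m + 6) = 3 * ((m + 4) * (m + 6)) * 5); last by ring.
rewrite (_ : 3 * ((m + 4) * (m + 6) * (m + 8)) * s = 3 * ((m + 4) * (m + 6)) * ((m + 8) * s)).
  by rewrite ler_pM2l.
by ring.
Qed.

Lemma min_q6_ge_inv s : 3 <= m -> q6B m <= 3 * q6A m * s -> 1 <= m * s.
Proof. by move=> m_ge3 /(min_q6_ge m_ge3); nra. Qed.

Lemma q6_curv_gt0 s : 3 <= m -> dq6 m s = 0 -> q6B m <= 3 * q6A m * s -> 0 < q6_curv m s.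
Proof.
move=> m_ge3 crit /(min_q6_ge m_ge3) s_ge.
have -> : q6_curv m s = 4 * (q6B m * s - q6C m) + 5 * dq6 m s.
  by rewrite /q6_curv /dq6; ring.
rewrite crit mulr0 addr0 /q6B /q6C.
rewrite (_ : 15 * (m + 4) * (m + 6) * s - 45 * (m + 4) = 15 * (m + 4) * ((m + 6) * s - 3)).
  by rewrite !mulr_gt0 //; nra.
by ring.
Qed.

End GegenbauerCubicBounds.

Lemma mul_additive_eq0 (V : zmodType) (R : idomainType) (g h : V -> R) (a : V) :
  {morph g : u v / u + v} -> {morph h : u v / u + v} ->
  (forall w, g w * h w = 0) -> g a != 0 -> forall w, h w = 0.
Proof.
move=> gD hD gh ga w; apply/eqP/negP => /negP hw.
have ha : h a = 0 by have /eqP := gh a; rewrite mulf_eq0 (negbTE ga) => /eqP.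
have gw : g w = 0 by have /eqP := gh w; rewrite mulf_eq0 (negbTE hw) orbF => /eqP.
have /eqP := gh (a + w); rewrite gD hD ha gw addr0 add0r mulf_eq0.
by rewrite (negbTE ga) (negbTE hw).
Qed.

Section RowDot.
Variables (R : realFieldType) (n : nat).
Implicit Types u v w : 'rV[R]_n.

Definition dot u v := \sum_i u ord0 i * v ord0 i.

Lemma dotC u v : dot u v = dot v u.
Proof. by apply: eq_bigr => i _; rewrite mulrC. Qed.

Lemma dotDl u v w : dot (u + v) w = dot u w + dot v w.
Proof. by rewrite -big_split; apply: eq_bigr => i _; rewrite !mxE mulrDl. Qed.

Lemma dotZl c u w : dot (c *: u) w = c * dot u w.
Proof. by rewrite mulr_sumr; apply: eq_bigr => i _; rewrite !mxE mulrA. Qed.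

Lemma dotDr u v w : dot w (u + v) = dot w u + dot w v.
Proof. by rewrite !(dotC w) dotDl. Qed.

Lemma dotZr c u w : dot w (c *: u) = c * dot w u.
Proof. by rewrite !(dotC w) dotZl. Qed.

Lemma dotBl u v w : dot (u - v) w = dot u w - dot v w.
Proof. by rewrite -scaleN1r dotDl dotZl mulN1r. Qed.

Lemma dotBr u v w : dot w (u - v) = dot w u - dot w v.
Proof. by rewrite !(dotC w) dotBl. Qed.

Lemma dotxx_ge0 u : 0 <= dot u u.
Proof. by apply: sumr_ge0 => i _; rewrite -expr2 sqr_ge0. Qed.

Lemma dot_unit_sqr_le1 u v : dot u u = 1 -> dot v v = 1 -> dot u v ^+ 2 <= 1.
Proof.
move=> uu vv; have := dotxx_ge0 (u - v); have := dotxx_ge0 (u + v).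
by rewrite !(dotBl, dotBr, dotDl, dotDr) uu vv (dotC v u); nra.
Qed.

Lemma dot_delta (i : 'I_n) v : dot (delta_mx ord0 i) v = v ord0 i.
Proof.
rewrite /dot (bigD1 i) //= mxE !eqxx mul1r big1 ?addr0 // => j /negbTE ji.
by rewrite mxE ji andbF mul0r.
Qed.

End RowDot.

Section FormOnHyperplanes.
Variables (R : realFieldType) (n : nat) (B : 'rV[R]_n -> 'rV[R]_n -> R).
Hypotheses (BC : forall u v, B u v = B v u)
  (BDl : forall u v w, B (u + v) w = B u w + B v w)
  (BZl : forall c u w, B (c *: u) w = c * B u w).
Implicit Types u v w x : 'rV[R]_n.

Lemma formDr u v w : B w (u + v) = B w u + B w v.
Proof. by rewrite !(BC w) BDl. Qed.

Lemma formZr c u w : B w (c *: u) = c * B w u.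
Proof. by rewrite !(BC w) BZl. Qed.

Lemma formBl u v w : B (u - v) w = B u w - B v w.
Proof. by rewrite -scaleN1r BDl BZl mulN1r. Qed.

Lemma formBr u v w : B w (u - v) = B w u - B w v.
Proof. by rewrite !(BC w) formBl. Qed.

Definition quad_vanishes_on_perp x := forall v, dot v x = 0 -> B v v = 0.

Lemma quad_vanish_perpE x : quad_vanishes_on_perp x -> dot x x = 1 ->
  forall v, B v v = dot v x * (2 * B x v - dot v x * B x x).
Proof.
move=> Bx xx v.
have /Bx : dot (v - dot v x *: x) x = 0 by rewrite dotBl dotZl xx mulr1 subrr.
rewrite !(formBl, formBr, BZl, formZr) (BC v x) => B0.
by rewrite -[LHS]subr0 -B0; ring.
Qed.

Lemma quad_vanish_perp2 x1 x2 :
  quad_vanishes_on_perp x1 -> quad_vanishes_on_perp x2 ->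
  dot x1 x1 = 1 -> dot x2 x2 = 1 -> dot x1 x2 ^+ 2 != 1 ->
  exists beta, forall v, B v v = beta * dot v x1 * dot v x2.
Proof.
move=> Bx1 Bx2 x11 x22 x12.
pose L v := 2 * B x1 v - dot v x1 * B x1 x1.
have LD : {morph L : u v / u + v} by move=> u v; rewrite /L formDr dotDl; ring.
have BL v : B v v = dot v x1 * L v by exact: quad_vanish_perpE.
pose P w := w - dot w x2 *: x2.
have PD : {morph P : u v / u + v}.
  by move=> u v; rewrite /P dotDl scalerDl opprD addrACA.
have P_perp w : dot (P w) x2 = 0 by rewrite dotBl dotZl x22 mulr1 subrr.
have LP0 : forall w, L (P w) = 0.
  apply: (@mul_additive_eq0 _ _ (fun w => dot (P w) x1) (L \o P) x1).
  - by move=> u v; rewrite /= PD dotDl.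
  - by move=> u v; rewrite /= PD LD.
  - by move=> w; rewrite /= -BL; exact: Bx2.
  rewrite dotBl dotZl x11 (dotC x2 x1) -expr2 subr_eq0 eq_sym; exact: x12.
exists (L x2) => v; rewrite BL (_ : L v = dot v x2 * L x2); first by ring.
have := LP0 v; rewrite /P /L formBr formZr dotBl dotZl (dotC x2 x1); lra.
Qed.

Lemma quad_vanish_equiangular x1 x2 x3 s :
  quad_vanishes_on_perp x1 -> quad_vanishes_on_perp x2 -> quad_vanishes_on_perp x3 ->
  dot x1 x1 = 1 -> dot x2 x2 = 1 -> dot x3 x3 = 1 ->
  dot x1 x2 ^+ 2 = s -> dot x1 x3 ^+ 2 = s -> dot x2 x3 ^+ 2 = s -> 0 < s < 1 ->
  forall v, B v v = 0.
Proof.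
move=> Bx1 Bx2 Bx3 x11 x22 x33 s12 s13 s23 /andP[s_gt0 s_lt1].
have [|beta Bbeta] := quad_vanish_perp2 Bx1 Bx2 x11 x22; first by rewrite s12 lt_eqF.
suff beta0 : beta = 0 by move=> v; rewrite Bbeta beta0 !mul0r.
have /Bx3 : dot (x1 - dot x1 x3 *: x3) x3 = 0 by rewrite dotBl dotZl x33 mulr1 subrr.
rewrite Bbeta !dotBl !dotZl x11 (dotC x3 x1) (dotC x3 x2) -expr2 s13.
move=> /eqP; rewrite !mulf_eq0 subr_eq0 => /orP[/orP[/eqP // | /eqP s1] | /eqP x12].
  by move: s_lt1; rewrite -s1 ltxx.
have : s = s * s by rewrite -{1}s12 (subr0_eq x12) exprMn s13 s23.
nra.
Qed.

End FormOnHyperplanes.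

Lemma sumr_const_seq (V : nmodType) (T : Type) (r : seq T) (x : V) :
  \sum_(i <- r) x = x *+ size r.
Proof. by rewrite big_const_seq count_predT iter_addr_0. Qed.

(* Central differences at t = 0, +-1, +-2, +-3 extract the t^2-coefficient of
   a polynomial of degree at most 6 in t. *)
Lemma zonal6_t2_coef (R : numFieldType) (m u w g : R) (Z : R -> R) :
  (forall t, Z t = zonal6 m (u + t * w) (1 + t ^+ 2 * g) 1) ->
  3 / 4 * (Z 1 + Z (-1)) - 3 / 40 * (Z 2 + Z (-2)) + 1 / 180 * (Z 3 + Z (-3))
    - 49 / 36 * Z 0
  = w ^+ 2 * q6_curv m (u ^+ 2) + g * (3 * q6 m (u ^+ 2) - u ^+ 2 * dq6 m (u ^+ 2)).
Proof. by move=> ZE; rewrite !ZE /zonal6 /q6_curv /q6 /dq6; field. Qed.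

Lemma design_zonal6_sum (R : realType) (n : nat) (Y : seq 'rV[R]_n) :
  harmonic_index_design 6 Y -> (forall y, y \in Y -> on_sphere y) ->
  forall e, \sum_(y <- Y) zonal6 n%:R (dot e y) (dot e e) 1 = 0.
Proof.
move=> design sphere e.
rewrite -[RHS](design _ (conj (zonal6_mpoly_homog (coords e))
  (laplacian_zonal6_mpoly (coords e)))).
apply: eq_big_seq => y yY; rewrite meval_zonal6_mpoly.
have sq_dot (u : 'rV[R]_n) : \sum_i coords u i ^+ 2 = dot u u.
  by apply: eq_bigr => i _; rewrite expr2.
by rewrite !sq_dot -(sq_dot y) (sphere y yY).
Qed.

Section Frame.
Variables (R : realFieldType) (n : nat) (Y : seq 'rV[R]_n) (lam : R).
Implicit Types u v w : 'rV[R]_n.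

Definition frame_form u v := \sum_(y <- Y) dot u y * dot v y - lam * dot u v.

Lemma frame_formC u v : frame_form u v = frame_form v u.
Proof.
by rewrite /frame_form dotC; congr (_ - _); apply: eq_bigr => y _; rewrite mulrC.
Qed.

Lemma frame_formDl u v w : frame_form (u + v) w = frame_form u w + frame_form v w.
Proof.
rewrite /frame_form dotDl mulrDr opprD addrACA -big_split /=.
by congr (_ + _); apply: eq_bigr => y _; rewrite dotDl mulrDl.
Qed.

Lemma frame_formZl c u w : frame_form (c *: u) w = c * frame_form u w.
Proof.
rewrite /frame_form dotZl mulrBr mulrCA [c * \sum_(y <- Y) _]mulr_sumr.
by congr (_ - _); apply: eq_bigr => y _; rewrite dotZl mulrA.
Qed.

Lemma frame_form_trace : (forall y, y \in Y -> dot y y = 1) ->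
  \sum_(i < n) frame_form (delta_mx ord0 i) (delta_mx ord0 i)
    = (size Y)%:R - lam * n%:R.
Proof.
move=> Y_unit; rewrite sumrB -mulr_sumr.
under eq_bigr => i _ do under eq_bigr => y _ do rewrite dot_delta.
rewrite exchange_big /= big_seq (eq_bigr (fun=> 1)) -?big_seq; last first.
  by move=> y /Y_unit <-; apply: eq_bigr.
rewrite sumr_const_seq (eq_bigr (fun=> 1)) ?sumr_const ?card_ord //.
by move=> i _; rewrite dot_delta mxE !eqxx.
Qed.

End Frame.

Section TightDesign.
Variables (R : realFieldType) (n : nat) (Y : seq 'rV[R]_n) (K c : R).
Local Notation m := (n%:R : R).
Local Notation N := ((size Y)%:R : R).
Hypotheses (n_ge3 : (3 <= n)%N) (Y_uniq : uniq Y)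
  (Y_unit : forall y, y \in Y -> dot y y = 1)
  (Y_zonal : forall e, \sum_(y <- Y) zonal6 m (dot e y) (dot e e) 1 = 0)
  (K_gt0 : 0 < K) (c_gt : 15 * K < c) (c_lt : c < K * q6 m 1)
  (Kq6_ge : forall s, 0 <= s <= 1 -> - c <= K * q6 m s)
  (size_Y : N = 1 + K * q6 m 1 / c).

Let m_ge3 : 3 <= m. Proof. by rewrite (ler_nat R 3). Qed.

Lemma sum_q6_inner x : x \in Y -> \sum_(y <- Y) q6 m (dot x y ^+ 2) = 0.
Proof.
move=> xY; rewrite -[RHS](Y_zonal x) (Y_unit xY).
by apply: eq_bigr => y _; rewrite zonal6_unit.
Qed.

Lemma q6_inner_eq_min x y : x \in Y -> y \in Y -> y != x ->
  K * q6 m (dot x y ^+ 2) = - c.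
Proof.
move=> xY yY yx; have c_gt0 : 0 < c by move: c_gt K_gt0; lra.
have term_ge0 z : z \in Y -> 0 <= K * q6 m (dot x z ^+ 2) + c.
  move=> zY; have := dot_unit_sqr_le1 (Y_unit xY) (Y_unit zY).
  by have := sqr_ge0 (dot x z); have := Kq6_ge (s := dot x z ^+ 2); lra.
have total : \sum_(z <- Y) (K * q6 m (dot x z ^+ 2) + c) = c + K * q6 m 1.
  rewrite big_split /= -mulr_sumr sum_q6_inner // mulr0 add0r sumr_const_seq.
  by rewrite -[c *+ _]mulr_natl size_Y; field; lra.
rewrite (bigD1_seq x) //= (Y_unit xY) expr1n in total.
have : \sum_(z <- Y | z != x) (K * q6 m (dot x z ^+ 2) + c) = 0 by lra.
rewrite big_seq_cond => /eqP; rewrite psumr_eq0 => [/allP/(_ y yY)|z /andP[zY _]].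
  by rewrite yY yx /= => /eqP; lra.
exact: term_ge0.
Qed.

Lemma inner_sq_crit x y : x \in Y -> y \in Y -> y != x ->
  [/\ 0 < dot x y ^+ 2 < 1, dq6 m (dot x y ^+ 2) = 0
    & q6B m <= 3 * q6A m * dot x y ^+ 2].
Proof.
move=> xY yY yx; have Kq6 := q6_inner_eq_min xY yY yx.
have s_le1 := dot_unit_sqr_le1 (Y_unit xY) (Y_unit yY).
set s := dot x y ^+ 2 in Kq6 s_le1 *.
have s_min t : 0 <= t <= 1 -> q6 m s <= q6 m t.
  by move=> t01; rewrite -(ler_pM2l K_gt0) Kq6 Kq6_ge.
have s_ge0 : 0 <= s by exact: sqr_ge0.
have s01 : 0 < s < 1.
  rewrite !lt_neqAle s_ge0 s_le1 !andbT; apply/andP; split; apply/eqP => s_eq.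
    by move: Kq6 c_gt; rewrite -s_eq /q6 expr0n /=; lra.
  by move: Kq6 c_lt c_gt K_gt0; rewrite s_eq; lra.
split => //; [exact: dq6_eq0_of_min | exact: q6B_le_of_min].
Qed.

Lemma inner_sq_eq x y x' y' : x \in Y -> y \in Y -> y != x ->
  x' \in Y -> y' \in Y -> y' != x' -> dot x y ^+ 2 = dot x' y' ^+ 2.
Proof.
move=> xY yY yx x'Y y'Y y'x'.
have [_ crit convex] := inner_sq_crit xY yY yx.
have [_ crit' convex'] := inner_sq_crit x'Y y'Y y'x'.
exact: min_q6_uniq m_ge3 crit convex crit' convex'.
Qed.

Section CommonInnerProduct.
Variable s : R.
Hypotheses (Y_equi : forall x y, x \in Y -> y \in Y -> y != x -> dot x y ^+ 2 = s)
  (s_crit : dq6 m s = 0).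

Lemma sum_sq_inner_perp x v : x \in Y -> dot v x = 0 ->
  (\sum_(y <- Y) dot v y ^+ 2) * q6_curv m s = dot v v * dq6 m 1.
Proof.
move=> xY vx; set g := dot v v.
pose Z t y := zonal6 m (dot x y + t * dot v y) (1 + t ^+ 2 * g) 1.
have Z_sum t : \sum_(y <- Y) Z t y = 0.
  rewrite -[RHS](Y_zonal (x + t *: v)); apply: eq_bigr => y _.
  rewrite /Z !(dotDl, dotDr, dotZl, dotZr) (Y_unit xY) vx (dotC x v) vx.
  by congr zonal6; rewrite /g; ring.
have coef y : y \in Y ->
    3 / 4 * (Z 1 y + Z (-1) y) - 3 / 40 * (Z 2 y + Z (-2) y)
    + 1 / 180 * (Z 3 y + Z (-3) y) - 49 / 36 * Z 0 y
  = dot v y ^+ 2 * q6_curv m s + 3 * g * q6 m (dot x y ^+ 2)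
    - (y == x)%:R * (g * dq6 m 1).
  move=> yY; rewrite (@zonal6_t2_coef _ m (dot x y) (dot v y) g (Z ^~ y)) //.
  have [->|yx] := eqVneq y x; first by rewrite vx (Y_unit xY) expr1n /=; ring.
  by rewrite (Y_equi xY yY yx) s_crit /=; ring.
clearbody Z.
have : \sum_(y <- Y) (3 / 4 * (Z 1 y + Z (-1) y) - 3 / 40 * (Z 2 y + Z (-2) y)
    + 1 / 180 * (Z 3 y + Z (-3) y) - 49 / 36 * Z 0 y) = 0.
  by rewrite !(sumrB, big_split) /= -!mulr_sumr !big_split /= !Z_sum; ring.
rewrite (eq_big_seq _ coef) sumrB big_split /= -mulr_suml -mulr_sumr sum_q6_inner //.
rewrite -mulr_suml [\sum_(y <- Y) (y == x)%:R](bigD1_seq x) //= eqxx.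
rewrite [\sum_(y <- Y | y != x) _]big1 ?addr0 => [|y /negbTE -> //].
by rewrite mulr0 mul1r; lra.
Qed.

Lemma sum_sq_inner_point x : x \in Y -> \sum_(y <- Y) dot x y ^+ 2 = 1 + (N - 1) * s.
Proof.
move=> xY; rewrite (bigD1_seq x) //= (Y_unit xY) expr1n big_seq_cond.
rewrite (eq_bigr (fun=> s)) => [|y /andP[yY yx]]; last exact: Y_equi.
have : \sum_(y <- Y) s = s + \sum_(y <- Y | y != x) s by rewrite (bigD1_seq x).
rewrite sumr_const_seq -mulr_natl -big_seq_cond; lra.
Qed.

Lemma frame_form_vanishes_perp x : 0 < q6_curv m s -> x \in Y ->
  quad_vanishes_on_perp (frame_form Y (dq6 m 1 / q6_curv m s)) x.
Proof.
move=> curv_gt0 xY v vx; rewrite /frame_form.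
under eq_bigr do rewrite -expr2.
rewrite -[\sum_(y <- Y) _](mulfK (lt0r_neq0 curv_gt0)) (sum_sq_inner_perp xY vx).
by ring.
Qed.

End CommonInnerProduct.

Lemma size_Y_gt2 : (2 < size Y)%N.
Proof.
have c_gt0 : 0 < c by move: c_gt K_gt0; lra.
rewrite -(ltr_nat R) size_Y.
have : 1 < K * q6 m 1 / c by rewrite ltr_pdivlMr // mul1r.
lra.
Qed.

Lemma tight_design_false : False.
Proof.
have size_gt2 := size_Y_gt2.
have inY i : (i < 3)%N -> nth 0 Y i \in Y.
  by move=> i_lt3; apply/mem_nth/(leq_trans i_lt3).
have neqY i j : (i < 3)%N -> (j < 3)%N -> i != j -> nth 0 Y i != nth 0 Y j.
  by move=> i_lt3 j_lt3; rewrite nth_uniq // ?(leq_trans i_lt3) ?(leq_trans j_lt3).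
set x1 := nth 0 Y 0; set x2 := nth 0 Y 1; set x3 := nth 0 Y 2.
have x1Y : x1 \in Y by exact: inY.
have x2Y : x2 \in Y by exact: inY.
have x3Y : x3 \in Y by exact: inY.
have x21 : x2 != x1 by exact: neqY.
set s := dot x1 x2 ^+ 2.
have [s01 s_crit s_convex] := inner_sq_crit x1Y x2Y x21.
have Y_equi x y : x \in Y -> y \in Y -> y != x -> dot x y ^+ 2 = s.
  by move=> xY yY yx; exact: inner_sq_eq xY yY yx x1Y x2Y x21.
have curv_gt0 := q6_curv_gt0 m_ge3 s_crit s_convex.
set lam := dq6 m 1 / q6_curv m s.
have frame0 : forall v, frame_form Y lam v v = 0.
  apply: (@quad_vanish_equiangular _ _ _ (@frame_formC _ _ Y lam)
    (@frame_formDl _ _ Y lam) (@frame_formZl _ _ Y lam) x1 x2 x3 s);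
    rewrite ?Y_unit ?Y_equi //; try exact: neqY;
    exact: frame_form_vanishes_perp.
have lam_eq : lam = 1 + (N - 1) * s.
  have := frame0 x1; rewrite /frame_form (Y_unit x1Y) mulr1.
  rewrite (eq_bigr _ (fun y _ => esym (expr2 (dot x1 y)))).
  by rewrite (sum_sq_inner_point Y_equi x1Y); lra.
have N_eq : N = lam * m.
  have := frame_form_trace lam Y_unit.
  by rewrite big1 => [|i _]; [lra | exact: frame0].
have ms_ge1 := min_q6_ge_inv m_ge3 s_convex.
have N_ge1 : 1 <= N by rewrite (ler_nat R 1) ltnW // (ltn_trans _ size_gt2).
have : 0 <= (N - 1) * (m * s - 1) by rewrite mulr_ge0 ?subr_ge0.
move: m_ge3; nra.
Qed.
End TightDesign.

Section GegenbauerMinimum.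
Variables (R : realType) (n : nat).
Local Notation m := (n%:R : R).

Definition Q6_scale : R := m * (m + 2) * (m + 10) / 6`!%:R.

Lemma Q6E (x : R) : Q6 n x = Q6_scale * q6 m (x ^+ 2).
Proof. by rewrite /Q6 /Q6_scale /q6 /q6A /q6B /q6C; ring. Qed.

Hypothesis n_ge3 : (3 <= n)%N.

Let m_ge3 : 3 <= m. Proof. by rewrite (ler_nat R 3). Qed.

Lemma Q6_scale_gt0 : 0 < Q6_scale.
Proof.
by rewrite /Q6_scale divr_gt0 ?ltr0n ?fact_gt0 // !mulr_gt0 //; move: m_ge3; lra.
Qed.

Let Q6_range := [set Q6 n x | x in [set x : R | -1 <= x <= 1]]%classic.

Lemma Q6_range_lb y : Q6_range y -> Q6_scale * (1 - q6 m 1) <= y.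
Proof.
move=> [x /= /andP[x_ge x_le] <-]; rewrite Q6E ler_pM2l ?Q6_scale_gt0 //.
suff : 1 <= q6 m (x ^+ 2) + q6 m 1 by lra.
by apply: q6_add_q6_1_ge1 => //; rewrite sqr_ge0 /=; nra.
Qed.

Lemma Q6_range_has_lbound : has_lbound Q6_range.
Proof. by exists (Q6_scale * (1 - q6 m 1)) => y; exact: Q6_range_lb. Qed.

Lemma Q6_ge_Nc6 (x : R) : -1 <= x <= 1 -> - c6 n <= Q6 n x.
Proof. by move=> x01; rewrite /c6 opprK; apply: (ge_inf Q6_range_has_lbound); exists x. Qed.

Lemma Q6_scale_q6_ge_Nc6 s : 0 <= s <= 1 -> - c6 n <= Q6_scale * q6 m s.
Proof.
move=> /andP[s_ge0 s_le1]; rewrite -(sqr_sqrtr s_ge0) -Q6E; apply: Q6_ge_Nc6.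
by have := sqrtr_ge0 s; have := sqr_sqrtr s_ge0; move=> sq ?; apply/andP; split; nra.
Qed.

Lemma c6_lt : c6 n < Q6_scale * q6 m 1.
Proof.
have : Q6_scale * (1 - q6 m 1) <= - c6 n.
  rewrite /c6 opprK; apply: lb_le_inf; last exact: Q6_range_lb.
  by exists (Q6 n 0), 0 => //=; lra.
have := Q6_scale_gt0; lra.
Qed.

Lemma c6_gt : 15 * Q6_scale < c6 n.
Proof.
set s := 15 / (2 * (m + 8)).
have s_ge0 : 0 <= s by rewrite divr_ge0 //; move: m_ge3; lra.
have s_le1 : s <= 1 by rewrite ler_pdivrMr; move: m_ge3; lra.
have := Q6_scale_q6_ge_Nc6 (s := s); rewrite s_ge0 s_le1 => /(_ isT).
have := q6_lt_N15 m_ge3; have := Q6_scale_gt0; nra.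
Qed.

End GegenbauerMinimum.

Theorem mainTheorem2 (R : realType) (n : nat) (hn : (3 <= n)%N) :
  ~ exists Y : seq 'rV[R]_n,
      [/\ uniq Y, (forall y, y \in Y -> on_sphere y),
          harmonic_index_design 6 Y & (size Y)%:R = b6 (R := R) n].
Proof.
case=> Y [Y_uniq Y_sphere Y_design size_Y].
have Y_unit y : y \in Y -> dot y y = 1.
  by move=> /Y_sphere <-; apply: eq_bigr => i _; rewrite expr2.
apply: (@tight_design_false R n Y (Q6_scale R n) (c6 n) hn Y_uniq Y_unit).
- exact: design_zonal6_sum.
- exact: Q6_scale_gt0.
- exact: c6_gt.
- exact: c6_lt.
- exact: Q6_scale_q6_ge_Nc6.
- by rewrite size_Y /b6 Q6E expr1n.
Qed.
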